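(* Let $L\in\mathbb R^{N\times N}$ be symmetric positive semidefinite. For $\ell=1,\dots,c$ let $P_\ell\in\mathbb R^{N_\ell\times N_{\ell-1}}$ ($N_0=N$) have full row rank with Moore–Penrose pseudoinverse $P_\ell^+$, and define $L_0=L$, $L_\ell=(P_\ell^+)^\top L_{\ell-1}P_\ell^+$, $\Pi_\ell=P_\ell^+P_\ell$, $\Pi_\ell^\perp=I-\Pi_\ell$, $\Pi=P_1^+\cdots P_c^+P_c\cdots P_1$ and $\Pi^\perp=I-\Pi$. Fix $x\in\mathbb R^N$ and set $x_0=x$, $x_\ell=P_\ell x_{\ell-1}$. If there are $\sigma_1,\dots,\sigma_c\ge0$ with $$\|\Pi_\ell^\perp x_{\ell-1}\|_{L_{\ell-1}}\le\sigma_\ell\|x_{\ell-1}\|_{L_{\ell-1}}\quad\text{for each }\ell\le c,$$ then $$\|\Pi^\perp x\|_L\le\Big(\sum_{\ell=1}^c\sigma_\ell\prod_{q=1}^{\ell-1}(1+\sigma_q)\Big)\|x\|_L=\Big(\prod_{\ell=1}^c(1+\sigma_\ell)-1\Big)\|x\|_L.$$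
   Context: For PSD $M$, $\|y\|_M=\sqrt{y^\top My}$. *)

From HB Require Import structures.
From mathcomp Require Import all_boot all_order all_algebra.
Set Implicit Arguments. Unset Strict Implicit. Unset Printing Implicit Defensive.
Import Order.TTheory GRing.Theory Num.Theory.
Local Open Scope ring_scope.

Definition qform (R : rcfType) (m : nat) (M : 'M[R]_m) (y : 'cV[R]_m) : R :=
  (y^T *m M *m y) ord0 ord0.

Definition mnorm (R : rcfType) (m : nat) (M : 'M[R]_m) (y : 'cV[R]_m) : R :=
  Num.sqrt (qform M y).

Definition psd (R : rcfType) (m : nat) (M : 'M[R]_m) : Prop :=
  M^T = M /\ forall y : 'cV[R]_m, 0 <= qform M y.

Definition is_pinv (R : rcfType) (p q : nat) (A : 'M[R]_(p, q)) (B : 'M[R]_(q, p)) : Prop :=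
  [/\ A *m B *m A = A, B *m A *m B = B,
      (A *m B)^T = A *m B & (B *m A)^T = B *m A].

Section Hier.
Variables (R : rcfType) (n : nat -> nat).
(* P l is P_{l+1} : 'M_(N_{l+1}, N_l); Pp l is its pseudoinverse *)
Variables (P : forall l, 'M[R]_(n l.+1, n l)) (Pp : forall l, 'M[R]_(n l, n l.+1)).

Fixpoint Lseq (L : 'M[R]_(n 0)) (l : nat) : 'M[R]_(n l) :=
  match l with 0 => L | l'.+1 => (Pp l')^T *m Lseq L l' *m Pp l' end.

Fixpoint xseq (x : 'cV[R]_(n 0)) (l : nat) : 'cV[R]_(n l) :=
  match l with 0 => x | l'.+1 => P l' *m xseq x l' end.

Fixpoint down (l : nat) : 'M[R]_(n l, n 0) :=
  match l with 0 => 1%:M | l'.+1 => P l' *m down l' end.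

Fixpoint up (l : nat) : 'M[R]_(n 0, n l) :=
  match l with 0 => 1%:M | l'.+1 => up l' *m Pp l' end.

Definition Pi (c : nat) : 'M[R]_(n 0) := up c *m down c.
End Hier.

From HB Require Import structures.
From mathcomp Require Import all_boot all_order all_algebra.
From mathcomp Require Import ring lra.
Set Implicit Arguments. Unset Strict Implicit. Unset Printing Implicit Defensive.
Import Order.TTheory GRing.Theory Num.Theory.
Local Open Scope ring_scope.

(* Pi^perp = sum_l P_1^+ .. P_l^+ Pi_(l+1)^perp P_l .. P_1 telescopes, and
   P_l .. P_1 x = x_l.  The l-th term has L-seminorm ||Pi_(l+1)^perp x_l||_(L_l)
   <= sigma_(l+1) ||x_l||_(L_l), since L_l is the pull-back of L along
   P_1^+ .. P_l^+.  Writing P_(l+1)^+ P_(l+1) x_l = x_l - Pi_(l+1)^perp x_l gives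
   ||x_(l+1)||_(L_(l+1)) <= (1 + sigma_(l+1)) ||x_l||_(L_l), so
   ||x_l||_(L_l) <= prod_(q <= l) (1 + sigma_q) ||x||_L, and the triangle
   inequality for the seminorm ||.||_L concludes.  Nothing here uses that P_l
   has full row rank or that P_l^+ is its pseudoinverse. *)

Lemma qform_trmx_mulmx (R : rcfType) (m k : nat) (M : 'M[R]_m)
    (A : 'M[R]_(m, k)) (y : 'cV[R]_k) :
  qform (A^T *m M *m A) y = qform M (A *m y).
Proof. by rewrite /qform trmx_mul !mulmxA. Qed.

Lemma mnorm_trmx_mulmx (R : rcfType) (m k : nat) (M : 'M[R]_m)
    (A : 'M[R]_(m, k)) (y : 'cV[R]_k) :
  mnorm (A^T *m M *m A) y = mnorm M (A *m y).
Proof. by rewrite /mnorm qform_trmx_mulmx. Qed.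

Lemma psd_trmx_mulmx (R : rcfType) (m k : nat) (M : 'M[R]_m) (A : 'M[R]_(m, k)) :
  psd M -> psd (A^T *m M *m A).
Proof.
move=> [symM posM]; split; first by rewrite !trmx_mul trmxK symM mulmxA.
by move=> y; rewrite qform_trmx_mulmx.
Qed.

Section PsdSeminorm.
Variables (R : rcfType) (m : nat) (M : 'M[R]_m).
Hypothesis psdM : psd M.

Definition bform (u v : 'cV[R]_m) : R := (u^T *m M *m v) ord0 ord0.

Lemma bformC u v : bform v u = bform u v.
Proof.
rewrite /bform -[in LHS](trmxK (v^T *m M *m u)) [in LHS]mxE.
by rewrite !trmx_mul trmxK psdM.1 mulmxA.
Qed.

Lemma bformDl u v w : bform (u + v) w = bform u w + bform v w.
Proof. by rewrite /bform linearD /= !mulmxDl mxE. Qed.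

Lemma bformZl a u w : bform (a *: u) w = a * bform u w.
Proof. by rewrite /bform linearZ /= -!scalemxAl mxE. Qed.

Lemma qform_lincomb a b u v :
  qform M (a *: u + b *: v)
  = a ^+ 2 * qform M u + 2 * a * b * bform u v + b ^+ 2 * qform M v.
Proof.
have bformDr w1 w2 w : bform w (w1 + w2) = bform w w1 + bform w w2.
  by rewrite bformC bformDl !(bformC w).
have bformZr c w1 w : bform w (c *: w1) = c * bform w w1.
  by rewrite bformC bformZl bformC.
rewrite -[qform _ _]/(bform _ _) !(bformDl, bformDr, bformZl, bformZr).
by rewrite (bformC v u) /bform /qform; ring.
Qed.

Lemma bform_Cauchy_Schwarz u v : bform u v ^+ 2 <= qform M u * qform M v.
Proof.
have posu := psdM.2 u; have posv := psdM.2 v.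
set X := bform u v; set Y := qform M u; set Z := qform M v in posu posv *.
have pos a b : 0 <= a ^+ 2 * Y + 2 * a * b * X + b ^+ 2 * Z.
  by rewrite -qform_lincomb psdM.2.
have posZ : 0 <= Z * (Y * Z - X ^+ 2).
  by have := pos Z (- X); congr (_ <= _); ring.
have posY : 0 <= Y * (Y * Z - X ^+ 2).
  by have := pos X (- Y); congr (_ <= _); ring.
rewrite leNgt; apply/negP => lt_YZ.
have Y0 : Y = 0 by apply/eqP; rewrite eq_le posu andbT; nra.
have Z0 : Z = 0 by apply/eqP; rewrite eq_le posv andbT; nra.
(* With Y = Z = 0 the choices a = 1, b = +-1 force X = 0. *)
by have := pos 1 1; have := pos 1 (-1); move: lt_YZ; rewrite Y0 Z0; nra.
Qed.

Lemma mnormD_le u v : mnorm M (u + v) <= mnorm M u + mnorm M v.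
Proof.
have posu := psdM.2 u; have posv := psdM.2 v.
have bform_le : bform u v <= mnorm M u * mnorm M v.
  rewrite /mnorm -sqrtrM // (le_trans (ler_norm _)) // -sqrtr_sqr.
  by rewrite ler_wsqrtr // bform_Cauchy_Schwarz.
rewrite -[mnorm M u + _]ger0_norm ?addr_ge0 ?sqrtr_ge0 // -sqrtr_sqr {1}/mnorm.
have -> : qform M (u + v) = qform M u + 2 * bform u v + qform M v.
  by rewrite -{1}[u]scale1r -{1}[v]scale1r qform_lincomb; ring.
by rewrite ler_wsqrtr // sqrrD /mnorm !sqr_sqrtr // -!/(mnorm M _); lra.
Qed.

Lemma mnormN u : mnorm M (- u) = mnorm M u.
Proof.
by rewrite /mnorm /qform (raddfN (@trmx R m 1)) mulNmx mulmxN mulNmx opprK.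
Qed.

Lemma mnormB_le u v : mnorm M (u - v) <= mnorm M u + mnorm M v.
Proof. by rewrite -(mnormN v) mnormD_le. Qed.

Lemma mnorm0 : mnorm M 0 = 0.
Proof. by rewrite /mnorm /qform mulmx0 mxE sqrtr0. Qed.

Lemma mnorm_sum_le k (f : 'I_k -> 'cV[R]_m) :
  mnorm M (\sum_(i < k) f i) <= \sum_(i < k) mnorm M (f i).
Proof.
elim/big_ind2: _ => [|a u b v ua vb|//]; first by rewrite mnorm0.
exact: le_trans (mnormD_le u v) (lerD ua vb).
Qed.

Lemma mnorm_mulmx_le Q s y :
  mnorm M ((1%:M - Q) *m y) <= s * mnorm M y ->
  mnorm M (Q *m y) <= (1 + s) * mnorm M y.
Proof.
move=> compl_le; have -> : Q *m y = y - (1%:M - Q) *m y.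
  by rewrite mulmxBl mul1mx opprB addrC subrK.
by rewrite (le_trans (mnormB_le _ _)) // mulrDl mul1r lerD2l.
Qed.

End PsdSeminorm.

Lemma sum_prod1D_telescope (R : comPzRingType) (s : nat -> R) c :
  \sum_(l < c) s l * \prod_(q < l) (1 + s q) = \prod_(l < c) (1 + s l) - 1.
Proof.
elim: c => [|c IH]; first by rewrite !big_ord0 subrr.
by rewrite !big_ord_recr /= IH; ring.
Qed.

Section Hierarchy.
Variables (R : rcfType) (n : nat -> nat) (L : 'M[R]_(n 0)).
Variables (P : forall l, 'M[R]_(n l.+1, n l)) (Pp : forall l, 'M[R]_(n l, n l.+1)).

Lemma psd_Lseq l : psd L -> psd (Lseq Pp L l).
Proof. by move=> psdL; elim: l => //= l; apply: psd_trmx_mulmx. Qed.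

Lemma Lseq_up l : Lseq Pp L l = (up Pp l)^T *m L *m up Pp l.
Proof.
elim: l => [|l IH] /=; first by rewrite trmx1 mul1mx mulmx1.
by rewrite IH trmx_mul !mulmxA.
Qed.

Lemma mnorm_Lseq l y : mnorm (Lseq Pp L l) y = mnorm L (up Pp l *m y).
Proof. by rewrite Lseq_up mnorm_trmx_mulmx. Qed.

Lemma down_mulmx x l : down P l *m x = xseq P x l.
Proof. by elim: l => [|l IH] /=; rewrite ?mul1mx // -mulmxA IH. Qed.

Lemma subr1_Pi_telescope c :
  1%:M - Pi P Pp c = \sum_(l < c) up Pp l *m (1%:M - Pp l *m P l) *m down P l.
Proof.
elim: c => [|c IH]; first by rewrite big_ord0 /Pi /= mulmx1 subrr.
rewrite big_ord_recr /= -IH /Pi /= mulmxBr mulmx1 mulmxBl !mulmxA.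
by rewrite addrA subrK.
Qed.

Variables (x : 'cV[R]_(n 0)) (sigma : nat -> R) (c : nat).
Hypothesis psdL : psd L.
Hypothesis sigma_ge0 : forall l, (l < c)%N -> 0 <= sigma l.
Hypothesis compl_le : forall l, (l < c)%N ->
  mnorm (Lseq Pp L l) ((1%:M - Pp l *m P l) *m xseq P x l)
    <= sigma l * mnorm (Lseq Pp L l) (xseq P x l).

Lemma mnorm_xseq_le l : (l <= c)%N ->
  mnorm (Lseq Pp L l) (xseq P x l) <= (\prod_(q < l) (1 + sigma q)) * mnorm L x.
Proof.
elim: l => [|l IH] lc /=; first by rewrite big_ord0 mul1r.
rewrite mnorm_trmx_mulmx mulmxA big_ord_recr /= mulrAC [X in _ <= X]mulrC.
apply: le_trans (mnorm_mulmx_le (psd_Lseq l psdL) (compl_le lc)) _.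
by rewrite ler_wpM2l ?IH 1?ltnW // addr_ge0 ?sigma_ge0.
Qed.

End Hierarchy.

Theorem lemma3 (R : rcfType) (c : nat) (n : nat -> nat)
  (L : 'M[R]_(n 0%N))
  (P : forall l, 'M[R]_(n l.+1, n l)) (Pp : forall l, 'M[R]_(n l, n l.+1))
  (x : 'cV[R]_(n 0%N)) (sigma : nat -> R) :
  psd L ->
  (forall l, (l < c)%N -> row_free (P l)) ->
  (forall l, (l < c)%N -> is_pinv (P l) (Pp l)) ->
  (forall l, (l < c)%N -> 0 <= sigma l) ->
  (forall l, (l < c)%N ->
     mnorm (Lseq Pp L l) ((1%:M - Pp l *m P l) *m xseq P x l)
       <= sigma l * mnorm (Lseq Pp L l) (xseq P x l)) ->
  mnorm L ((1%:M - Pi P Pp c) *m x)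
    <= (\sum_(l < c) sigma l * \prod_(q < l) (1 + sigma q)) * mnorm L x
  /\ \sum_(l < c) sigma l * \prod_(q < l) (1 + sigma q)
     = \prod_(l < c) (1 + sigma l) - 1.
Proof.
move=> psdL _ _ sigma_ge0 compl_le; split; last exact: sum_prod1D_telescope.
rewrite subr1_Pi_telescope mulmx_suml.
apply: le_trans (mnorm_sum_le psdL _) _.
rewrite mulr_suml; apply: ler_sum => l _.
rewrite -!mulmxA down_mulmx -mnorm_Lseq -mulrA.
apply: le_trans (compl_le _ (ltn_ord l)) _.
rewrite ler_wpM2l ?sigma_ge0 //.
exact: mnorm_xseq_le (ltnW (ltn_ord l)).
Qed.
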